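(* Let $M\subseteq\mathbb{R}^n$ be a closed convex set, $\alpha\ge0$, $p\in\mathbb{R}^n$, and $M'=(1+\alpha)M+p$, and assume $\operatorname{aff}(M)\ne\operatorname{aff}(M')$. Let $P=\operatorname{conv}(M\cup M')$. Then: (a) $P=\bigcup_{0\le\mu\le1}\big((1+\mu\alpha)M+\mu p\big)$. (b) Every $f\in P$ can be written as $f=(1+\mu\alpha)x+\mu p$ for some $0\le\mu\le1$ and $x\in M$. Furthermore, if $f=(1+\mu\alpha)x+\mu p$ with $x\in M$ and $\frac13\le\mu\le1$, then \[\tfrac14P+\tfrac34f\subseteq\operatorname{conv}(\{x\}\cup M')\subseteq P.\] *)

From HB Require Import structures.
From mathcomp Require Import all_boot all_order all_algebra.
From mathcomp Require Import all_classical all_reals all_analysis.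
Set Implicit Arguments. Unset Strict Implicit. Unset Printing Implicit Defensive.
Import Order.TTheory GRing.Theory Num.Theory.
Import numFieldTopology.Exports.
Local Open Scope classical_set_scope.
Local Open Scope ring_scope.

Definition convexR (R : realType) (n : nat) (C : set 'rV[R]_n) : Prop :=
  forall x y (t : R), C x -> C y -> 0 <= t -> t <= 1 ->
    C (t *: x + (1 - t) *: y).

Definition affineR (R : realType) (n : nat) (C : set 'rV[R]_n) : Prop :=
  forall x y (t : R), C x -> C y -> C (t *: x + (1 - t) *: y).

Definition conv_hull (R : realType) (n : nat) (A : set 'rV[R]_n) : set 'rV[R]_n :=
  [set z | forall C, convexR C -> A `<=` C -> C z].

Definition aff_hull (R : realType) (n : nat) (A : set 'rV[R]_n) : set 'rV[R]_n :=
  [set z | forall C, affineR C -> A `<=` C -> C z].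

Definition scale_shift (R : realType) (n : nat) (c : R) (A : set 'rV[R]_n)
  (p : 'rV[R]_n) : set 'rV[R]_n := [set c *: x + p | x in A].

From HB Require Import structures.
From mathcomp Require Import all_boot all_order all_algebra.
From mathcomp Require Import all_classical all_reals all_analysis.
From mathcomp Require Import ring lra.
Set Implicit Arguments. Unset Strict Implicit. Unset Printing Implicit Defensive.
Import Order.TTheory GRing.Theory Num.Theory.
Import numFieldTopology.Exports.
Local Open Scope classical_set_scope.
Local Open Scope ring_scope.

(* The point (1 + mu alpha) x + mu p is the convex combination with weights
   mu, 1 - mu of (1 + alpha) x + p in M' and x in M, so every homothet lies in
   P.  Conversely the union of the homothets contains M and M' and is convex,
   because a nonnegative combination a x1 + b x2 of points of a convex set is
   (a + b) times a point of that set.  The same fact gives (b): writing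
   y/4 + 3f/4 as l m' + (1 - l) x with l = (nu + 3 mu)/4 and m' in M', the
   required point of M is a nonnegative combination of the points z, x of M
   underlying y and f, and mu >= 1/3 keeps the weight of x nonnegative. *)

Section ConvHull.
Variables (R : realType) (n : nat).
Implicit Types A B K : set 'rV[R]_n.

Lemma sub_conv_hull A : A `<=` conv_hull A.
Proof. by move=> z Az K _ AK; exact: AK. Qed.

Lemma conv_hull_comb A a b (t : R) :
  A a -> A b -> 0 <= t -> t <= 1 -> conv_hull A (t *: a + (1 - t) *: b).
Proof. by move=> Aa Ab t0 t1 K cK AK; apply: cK => //; apply: AK. Qed.

Lemma convex_conv_hull A : convexR (conv_hull A).
Proof.
move=> x y t hx hy t0 t1 K cK AK.
exact: cK (hx K cK AK) (hy K cK AK) t0 t1.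
Qed.

Lemma conv_hull_min A K : convexR K -> A `<=` K -> conv_hull A `<=` K.
Proof. by move=> cK AK z; apply. Qed.

Lemma conv_hull_sub A B : A `<=` conv_hull B -> conv_hull A `<=` conv_hull B.
Proof. exact: conv_hull_min (@convex_conv_hull B). Qed.

Lemma convex_conic_comb K (a b : R) x1 x2 :
  convexR K -> 0 <= a -> 0 <= b -> 0 < a + b -> K x1 -> K x2 ->
  exists2 x, K x & a *: x1 + b *: x2 = (a + b) *: x.
Proof.
move=> cK a0 b0 ab0 Kx1 Kx2; have ab_neq0 : a + b != 0 by rewrite gt_eqF.
exists (a / (a + b) *: x1 + (1 - a / (a + b)) *: x2).
  apply: cK => //; first by rewrite divr_ge0 // ltW.
  by rewrite ler_pdivrMr // mul1r lerDl.
by apply/rowP => i; rewrite !mxE; field.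
Qed.

End ConvHull.

Section HomothetUnion.
Variables (R : realType) (n : nat) (M : set 'rV[R]_n) (alpha : R) (p : 'rV[R]_n).
Hypotheses (convM : convexR M) (alpha_ge0 : 0 <= alpha).

Local Notation M' := (scale_shift (1 + alpha) M p).

Definition homothet_union : set 'rV[R]_n :=
  \bigcup_(mu in [set mu : R | 0 <= mu <= 1])
    scale_shift (1 + mu * alpha) M (mu *: p).

Lemma homothet_point_comb (mu : R) x :
  (1 + mu * alpha) *: x + mu *: p = mu *: ((1 + alpha) *: x + p) + (1 - mu) *: x.
Proof. by apply/rowP => i; rewrite !mxE; ring. Qed.

Lemma convex_homothet_union : convexR homothet_union.
Proof.
move=> _ _ t [m1 /andP[m10 m11] [x1 Mx1 <-]] [m2 /andP[m20 m21] [x2 Mx2 <-]] t0 t1.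
have m1a : 0 <= m1 * alpha by rewrite mulr_ge0.
have m2a : 0 <= m2 * alpha by rewrite mulr_ge0.
have [x Mx comb] : exists2 x, M x &
    t * (1 + m1 * alpha) *: x1 + (1 - t) * (1 + m2 * alpha) *: x2 =
    (t * (1 + m1 * alpha) + (1 - t) * (1 + m2 * alpha)) *: x.
  by apply: convex_conic_comb => //; nra.
exists (t * m1 + (1 - t) * m2); first by apply/andP; split; nra.
exists x => //; apply/rowP => i; move/rowP/(_ i): comb; rewrite !mxE => comb.
have -> : 1 + (t * m1 + (1 - t) * m2) * alpha =
          t * (1 + m1 * alpha) + (1 - t) * (1 + m2 * alpha) by ring.
rewrite -comb; ring.
Qed.

Lemma conv_hull_homothets : conv_hull (M `|` M') = homothet_union.
Proof.
apply/seteqP; split.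
- apply: conv_hull_min; first exact: convex_homothet_union.
  move=> z [Mz | [x Mx <-]].
  + exists 0; first by rewrite /= lexx ler01.
    by exists z => //; rewrite mul0r addr0 scale1r scale0r addr0.
  + exists 1; first by rewrite /= ler01 lexx.
    by exists x => //; rewrite mul1r scale1r.
- move=> _ [mu /andP[mu0 mu1] [x Mx <-]].
  rewrite homothet_point_comb.
  by apply: conv_hull_comb => //; [right; exists x | left].
Qed.

Lemma homothet_contraction_conv_hull (mu : R) x y :
  M x -> 3^-1 <= mu -> mu <= 1 -> homothet_union y ->
  conv_hull (x |` M') (4^-1 *: y + (3 / 4) *: ((1 + mu * alpha) *: x + mu *: p)).
Proof.
move=> Mx mu3 mu1 [nu /andP[nu0 nu1] [z Mz <-]].
have nua : 0 <= nu * alpha by rewrite mulr_ge0.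
have mua : 0 <= mu * alpha by rewrite mulr_ge0 //; lra.
pose l := nu / 4 + 3 * mu / 4.
pose c := (1 + nu * alpha) / 4.
have [w Mw comb] :
    exists2 w, M w & c *: z + (l * (1 + alpha) - c) *: x = (c + (l * (1 + alpha) - c)) *: w.
  apply: convex_conic_comb => //; rewrite /c /l; nra.
have -> : 4^-1 *: ((1 + nu * alpha) *: z + nu *: p) +
          (3 / 4) *: ((1 + mu * alpha) *: x + mu *: p) =
          l *: ((1 + alpha) *: w + p) + (1 - l) *: x.
  apply/rowP => i; move/rowP/(_ i): comb; rewrite !mxE => comb.
  have -> : l * ((1 + alpha) * w 0 i + p 0 i) =
            (c + (l * (1 + alpha) - c)) * w 0 i + l * p 0 i by ring.
  by rewrite -comb /l /c; field.
have [l0 l1] : 0 <= l /\ l <= 1 by rewrite /l; split; lra.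
by apply: conv_hull_comb => //; [right; exists w | left].
Qed.

End HomothetUnion.

Theorem lemma5p2 (R : realType) (n : nat) (M : set 'rV[R]_n) (alpha : R)
  (p : 'rV[R]_n) :
  closed M -> convexR M -> 0 <= alpha ->
  aff_hull M <> aff_hull (scale_shift (1 + alpha) M p) ->
  let M' := scale_shift (1 + alpha) M p in
  let P := conv_hull (M `|` M') in
  (* (a) *)
  P = \bigcup_(mu in [set mu : R | 0 <= mu <= 1])
        scale_shift (1 + mu * alpha) M (mu *: p)
  (* (b) *)
  /\ (forall f, P f -> exists mu x, 0 <= mu <= 1 /\ M x /\
        f = (1 + mu * alpha) *: x + mu *: p)
  /\ (forall f x (mu : R), M x -> 3^-1 <= mu -> mu <= 1 ->
        f = (1 + mu * alpha) *: x + mu *: p ->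
        [set 4^-1 *: y + (3 / 4) *: f | y in P] `<=` conv_hull (x |` M')
        /\ conv_hull (x |` M') `<=` P).
Proof.
move=> _ convM alpha_ge0 _ M' P.
have PE : P = homothet_union M alpha p := conv_hull_homothets p convM alpha_ge0.
split; first exact: PE.
split.
  by move=> f; rewrite PE => -[mu mu01 [x Mx <-]]; exists mu, x.
move=> f x mu Mx mu3 mu1 ->; split.
  move=> _ [y Py <-]; rewrite PE in Py.
  exact: homothet_contraction_conv_hull.
apply: conv_hull_sub => z [-> | M'z]; apply: sub_conv_hull; [left | right] => //.
Qed.
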